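(* Let $\mathcal G$ be an ultragraph (with no sinks) and $X$ its ultragraph shift space with metric $d$, and suppose there is a vertex $v\in G^0$ with $\#CP_{\mathcal G}(v)\ge2$. Then $(X,\sigma)$ is distributionally chaotic of type 1. Moreover, $X$ contains an uncountable, perfect, compact subset which is a DC1 set, and $X$ also contains an uncountable DC1 set which is not closed and whose closure is not a DC1 set.
   Context: An ultragraph $\mathcal G=(G^0,\mathcal G^1,r,s)$ consists of countable sets $G^0$ (vertices) and $\mathcal G^1$ (edges), a map $s:\mathcal G^1\to G^0$ and a map $r:\mathcal G^1\to P(G^0)\setminus\{\emptyset\}$. Standing assumption: $\mathcal G$ has no sinks, i.e. $s^{-1}(v)\neq\emptyset$ for every $v\in G^0$. $\mathcal G^0$ is the smallest subset of $P(G^0)$ containing $\{v\}$ for all $v\in G^0$ and $r(e)$ for all $e\in\mathcal G^1$, and closed under finite unions and nonempty finite intersections. A finite path is either an element of $\mathcal G^0$ (length $0$) or a sequence of edges $e_1\dots e_k$ with $s(e_{i+1})\in r(e_i)$ (length $k$); an infinite path is a sequence $e_1e_2\dots$ of edges with $s(e_{i+1})\in r(e_i)$ for all $i$, and $\mathfrak p^\infty$ is the set of infinite paths. The set of ultrapaths $\mathfrak p$ consists of all $A\in\mathcal G^0$ (length $0$) and all pairs $(\alpha,A)$ with $\alpha=e_1\dots e_k$ a finite path, $k\ge1$, $A\in\mathcal G^0$, $A\subseteq r(e_k)$ (length $k$). A set $A\in\mathcal G^0$ is an infinite emitter if $\{e\in\mathcal G^1:s(e)\in A\}$ is infinite, and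 a minimal infinite emitter if moreover no proper subset of $A$ belonging to $\mathcal G^0$ is an infinite emitter. The ultragraph shift space is $X=\mathfrak p^\infty\cup X_{fin}$, where $X_{fin}$ consists of all $(\alpha,A)\in\mathfrak p$ with $|\alpha|\ge1$ and $A$ a minimal infinite emitter contained in $r(\alpha)$, together with all minimal infinite emitters $A\in\mathcal G^0$. An ultrapath $p$ is an initial segment of $x\in X$ when: if $p=A\in\mathcal G^0$, then either $x$ has length $\ge1$ and its first edge has source in $A$, or $x=B\in\mathcal G^0$ with $B\subseteq A$; if $p=(\alpha,A)$ with $|\alpha|\ge1$, then the first $|\alpha|$ edges of $x$ form $\alpha$ and either $x$ has length $>|\alpha|$ and its $(|\alpha|+1)$-th edge has source in $A$, or $x=(\alpha,B)$ with $B\subseteq A$. Fix an enumeration $\mathfrak p=\{p_1,p_2,\dots\}$; the metric on $X$ is $d(x,x)=0$ and, for $x\neq y$, $d(x,y)=2^{-i}$ where $i$ is the least index such that $p_i$ is an initial segment of exactly one of $x,y$. The shift map $\sigma:X\to X$ is $\sigma(\gamma_1\gamma_2\dots)=\gamma_2\gamma_3\dots$, $\sigma((\gamma_1\dots\gamma_n,A))=(\gamma_2\dots\gamma_n,A)$ if $n>1$, $\sigma((\gamma_1,A))=A$, $\sigma(A)=A$. For $\delta>0$, $n\ge1$ and $x,y\in X$, the distribution function is $\Phi(n,\delta,x,y)=\frac{\#\{0\le k\le n: d(\sigma^k(x),\sigma^k(y))<\delta\}}{n}$. A pair $(x,y)$ is a DC1 pair if $\limsup_n\Phi(n,\delta,x,y)=1$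 for all $\delta>0$ and $\liminf_n\Phi(n,\delta_0,x,y)=0$ for some $\delta_0>0$. A set $S\subseteq X$ is a DC1 set if every pair of distinct elements of $S$ is a DC1 pair; $(X,\sigma)$ is distributionally chaotic of type 1 if $X$ contains an uncountable DC1 set. A closed path based at the vertex $v$ is a finite path $e_1e_2\dots e_k$ ($k\ge1$) with $v=s(e_1)\in r(e_k)$ and $s(e_i)\neq v$ for all $1<i\le k$; $CP_{\mathcal G}(v)$ denotes the set of closed paths based at $v$. *)

From Stdlib Require Import Reals List Arith ClassicalEpsilon.
Import ListNotations.
Open Scope R_scope.
Set Implicit Arguments.

Definition countable (T : Type) : Prop :=
  exists f : T -> nat, forall a b, f a = f b -> a = b.

(** Ultrapaths (α, A): α a list of edges (empty list = length-0 ultrapath A). *)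
Record upath (V E : Type) := UP { up_edges : list E; up_set : V -> Prop }.

(** Points of the shift space: infinite paths, or finite (α, A) (α possibly empty). *)
Inductive point (V E : Type) :=
| IP (f : nat -> E)
| FP (l : list E) (A : V -> Prop).
Arguments IP {V E} f.
Arguments FP {V E} l A.

Definition limsup_is (u : nat -> R) (l : R) : Prop :=
  (forall eps, eps > 0 -> forall N : nat, exists n, (n >= N)%nat /\ u n > l - eps) /\
  (forall eps, eps > 0 -> exists N : nat, forall n, (n >= N)%nat -> u n < l + eps).

Definition liminf_is (u : nat -> R) (l : R) : Prop :=
  (forall eps, eps > 0 -> forall N : nat, exists n, (n >= N)%nat /\ u n < l + eps) /\
  (forall eps, eps > 0 -> exists N : nat, forall n, (n >= N)%nat -> u n > l - eps).

Section Ultragraph.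
Variables (V E : Type) (s : E -> V) (r : E -> V -> Prop).

(** The algebra 𝒢^0 (sets of vertices as predicates; closure under
    extensional equality, finite unions (incl. the empty union) and
    nonempty finite intersections). *)
Inductive InG0 : (V -> Prop) -> Prop :=
| G0_single (v : V) : InG0 (fun x => x = v)
| G0_range (e : E) : InG0 (r e)
| G0_empty : InG0 (fun _ => False)
| G0_union A B : InG0 A -> InG0 B -> InG0 (fun x => A x \/ B x)
| G0_inter A B : InG0 A -> InG0 B -> InG0 (fun x => A x /\ B x)
| G0_ext A B : InG0 A -> (forall x, A x <-> B x) -> InG0 B.

Fixpoint path_ok (l : list E) : Prop :=
  match l with
  | e :: ((e' :: _) as t) => r e (s e') /\ path_ok t
  | _ => True
  end.

Definition IsFinPath (l : list E) : Prop := l <> [] /\ path_ok l.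

Fixpoint lastE (l : list E) : option E :=
  match l with
  | [] => None
  | [e] => Some e
  | _ :: t => lastE t
  end.

(** A ⊆ r(α) where r(α) = r(last edge of α) *)
Definition sub_r_last (l : list E) (A : V -> Prop) : Prop :=
  match lastE l with
  | Some e => forall x, A x -> r e x
  | None => True
  end.

Definition IsInfPath (f : nat -> E) : Prop := forall i, r (f i) (s (f (S i))).

Definition IsUltrapath (q : upath V E) : Prop :=
  InG0 (up_set q) /\
  (up_edges q = [] \/ (IsFinPath (up_edges q) /\ sub_r_last (up_edges q) (up_set q))).

Definition inf_emitter (A : V -> Prop) : Prop :=
  InG0 A /\ ~ (exists l : list E, forall e, A (s e) -> In e l).

Definition min_inf_emitter (A : V -> Prop) : Prop :=
  inf_emitter A /\
  forall B, InG0 B -> (forall x, B x -> A x) -> (exists x, A x /\ ~ B x) ->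
    ~ inf_emitter B.

Definition InX (x : point V E) : Prop :=
  match x with
  | IP f => IsInfPath f
  | FP l A => min_inf_emitter A /\
              (l = [] \/ (IsFinPath l /\ sub_r_last l A))
  end.

Definition init_seg (q : upath V E) (x : point V E) : Prop :=
  let a := up_edges q in
  let A := up_set q in
  match x with
  | IP f => (forall i, (i < length a)%nat -> nth_error a i = Some (f i)) /\
            A (s (f (length a)))
  | FP l B => exists t, l = a ++ t /\
              ((exists e t', t = e :: t' /\ A (s e)) \/
               (t = [] /\ forall z, B z -> A z))
  end.

Definition distinguishes (q : upath V E) (x y : point V E) : Prop :=
  (init_seg q x /\ ~ init_seg q y) \/ (~ init_seg q x /\ init_seg q y).

(** enumeration p_1, p_2, ... of the ultrapaths; p n is p_{n+1} *)
Definition enumeration (p : nat -> upath V E) : Prop :=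
  (forall n, IsUltrapath (p n)) /\
  (forall q, IsUltrapath q -> exists n, p n = q) /\
  (forall m n, p m = p n -> m = n).

Variable p : nat -> upath V E.

(** the metric: d(x,x)=0, d(x,y) = 2^{-i} for the least (1-based) index i
    with p_i an initial segment of exactly one of x, y *)
Definition d (x y : point V E) : R :=
  epsilon (inhabits 0%R) (fun t =>
    (x = y /\ t = 0) \/
    (x <> y /\ exists n, distinguishes (p n) x y /\
        (forall m, (m < n)%nat -> ~ distinguishes (p m) x y) /\
        t = (/2) ^ (S n))).

Definition sigma (x : point V E) : point V E :=
  match x with
  | IP f => IP (fun i => f (S i))
  | FP (_ :: l) A => FP l A
  | FP [] A => FP [] A
  end.

Fixpoint count_close (δ : R) (x y : point V E) (m : nat) : nat :=
  match m with
  | O => O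
  | S m' => (count_close δ x y m' +
             (if Rlt_dec (d (Nat.iter m' sigma x) (Nat.iter m' sigma y)) δ
              then 1 else 0))%nat
  end.

Definition Phi (n : nat) (δ : R) (x y : point V E) : R :=
  INR (count_close δ x y (S n)) / INR n.

Definition DC1_pair (x y : point V E) : Prop :=
  (forall δ, δ > 0 -> limsup_is (fun n => Phi n δ x y) 1) /\
  (exists δ0, δ0 > 0 /\ liminf_is (fun n => Phi n δ0 x y) 0).

Definition DC1_set (S : point V E -> Prop) : Prop :=
  (forall x, S x -> InX x) /\
  (forall x y, S x -> S y -> x <> y -> DC1_pair x y).

Definition uncountable (S : point V E -> Prop) : Prop :=
  ~ exists f : point V E -> nat, forall x y, S x -> S y -> f x = f y -> x = y.

Definition distrib_chaotic_1 : Prop :=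
  exists S, DC1_set S /\ uncountable S.

Definition closure_X (S : point V E -> Prop) (x : point V E) : Prop :=
  InX x /\ forall eps, eps > 0 -> exists y, S y /\ d x y < eps.

Definition closed_X (S : point V E -> Prop) : Prop :=
  (forall x, S x -> InX x) /\ (forall x, closure_X S x -> S x).

Definition perfect_X (S : point V E -> Prop) : Prop :=
  closed_X S /\
  forall x, S x -> forall eps, eps > 0 -> exists y, S y /\ y <> x /\ d x y < eps.

Definition open_in_X (U : point V E -> Prop) : Prop :=
  forall x, InX x -> U x -> exists eps, eps > 0 /\
    forall y, InX y -> d x y < eps -> U y.

Definition compact_X (S : point V E -> Prop) : Prop :=
  (forall x, S x -> InX x) /\
  forall (I : Type) (U : I -> point V E -> Prop),
    (forall i, open_in_X (U i)) -> (forall x, S x -> exists i, U i x) ->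
    exists l : list I, forall x, S x -> exists i, In i l /\ U i x.

End Ultragraph.

Definition closed_path (V E : Type) (s : E -> V) (r : E -> V -> Prop)
    (v : V) (l : list E) : Prop :=
  IsFinPath s r l /\
  (exists e1 t, l = e1 :: t /\ s e1 = v) /\
  (exists ek, lastE l = Some ek /\ r ek v) /\
  (forall i e, (0 < i)%nat -> nth_error l i = Some e -> s e <> v).

(** Let [a <> b] be closed paths at [v].  Since a closed path does
    not revisit [v], [ab <> ba]; these two loops have the same length [L] and
    differ at some position [q].  Every block sequence [c : nat -> bool]
    yields the infinite path [concat c] obtained by concatenating [ab] (for
    [true]) and [ba] (for [false]).  Metrically, infinite paths are close
    exactly when they agree on a long prefix, and paths over the finite
    alphabet of [ab] are uniformly apart when they differ early.  Hence
    [concat c1], [concat c2] form a DC1 pair as soon as [c1] and [c2] agree on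
    arbitrarily long windows [[a, Ka)] and disagree on such windows.
    A coding [code : (nat -> bool) -> (nat -> bool)] built on stages of
    doubly exponential length provides such windows for any two different
    sequences.  The image of the Cantor space under [w |-> concat (code w)]
    is then an uncountable DC1 set which is closed, perfect and compact;
    a variant prepending one extra block gives an uncountable DC1 set
    accumulating at a point whose orbit eventually coincides with the orbit
    of one of its members, so the set is not closed and its closure is not
    DC1. *)

From Pilot Require Import Defs.
From Stdlib Require Import Reals Lra List Lia Arith ClassicalEpsilon Classical FunctionalExtensionality.
Import ListNotations.
Local Open Scope nat_scope.

Lemma least_witness (Q : nat -> Prop) n :
  Q n -> exists m, Q m /\ forall k, k < m -> ~ Q k.
Proof.
  revert Q. induction n as [n IH] using lt_wf_ind. intros Q Hn.
  destruct (classic (exists k, k < n /\ Q k)) as [[k [Hk Qk]]|Hno].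
  - exact (IH k Hk Q Qk).
  - exists n. split; [exact Hn|]. intros k Hk Qk. apply Hno. eauto.
Qed.

Fixpoint max_upto (h : nat -> nat) (n : nat) : nat :=
  match n with O => h O | S n' => Nat.max (max_upto h n') (h n) end.

Lemma max_upto_ge h n m : m <= n -> h m <= max_upto h n.
Proof.
  induction n as [|n IH]; intros Hm; simpl.
  - replace m with 0 by lia. lia.
  - destruct (Nat.eq_dec m (S n)) as [->|Hne]; [lia|]. specialize (IH ltac:(lia)). lia.
Qed.

Lemma list_max_ge l a : In a l -> a <= list_max l.
Proof.
  intros H. pose proof (proj1 (list_max_le l (list_max l)) (le_n _)) as HF.
  rewrite Forall_forall in HF. auto.
Qed.

Definition prefix {E} (f : nat -> E) (n : nat) : list E := map f (seq 0 n).

Lemma prefix_length {E} (f : nat -> E) n : length (prefix f n) = n.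
Proof. unfold prefix. now rewrite length_map, length_seq. Qed.

Lemma prefix_nth_error {E} (f : nat -> E) n i :
  i < n -> nth_error (prefix f n) i = Some (f i).
Proof.
  intros H. unfold prefix. rewrite nth_error_map, nth_error_seq.
  destruct (Nat.ltb_spec i n); [reflexivity|lia].
Qed.

Lemma prefix_S {E} (f : nat -> E) n : prefix f (S n) = prefix f n ++ [f n].
Proof. unfold prefix. now rewrite seq_S, map_app. Qed.

Lemma prefix_of_agree {E} (l : list E) (g : nat -> E) :
  (forall i, i < length l -> nth_error l i = Some (g i)) -> l = prefix g (length l).
Proof.
  intros H. apply nth_error_ext. intros i.
  destruct (le_lt_dec (length l) i).
  - rewrite (proj2 (nth_error_None l i)) by lia.
    rewrite (proj2 (nth_error_None _ i)); [reflexivity|]. now rewrite prefix_length.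
  - rewrite H by lia. now rewrite prefix_nth_error.
Qed.

Fixpoint words {E} (F : list E) (n : nat) : list (list E) :=
  match n with
  | O => [[]]
  | S n' => flat_map (fun w => map (fun e => w ++ [e]) F) (words F n')
  end.

Lemma prefix_in_words {E} (F : list E) (f : nat -> E) n :
  (forall i, i < n -> In (f i) F) -> In (prefix f n) (words F n).
Proof.
  induction n as [|n IH]; intros H; simpl; [auto|].
  rewrite prefix_S. apply in_flat_map. exists (prefix f n). split.
  - apply IH. intros i Hi. apply H. lia.
  - apply (in_map (fun e => prefix f n ++ [e])). apply H. lia.
Qed.

Section Paths.
Variables (V E : Type) (s : E -> V) (r : E -> V -> Prop).

Lemma path_ok_nth (l : list E) e :
  path_ok s r l -> forall i, S i < length l -> r (nth i l e) (s (nth (S i) l e)).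
Proof.
  induction l as [|x t IH]; intros H i Hi; simpl in *; [lia|].
  destruct t as [|y t']; [simpl in Hi; lia|].
  destruct H as [H1 H2]. destruct i as [|i]; [exact H1|].
  apply IH; [exact H2|simpl in *; lia].
Qed.

Lemma lastE_nth (l : list E) e e' : lastE l = Some e' -> e' = nth (length l - 1) l e.
Proof.
  induction l as [|x t IH]; simpl; intros H; [discriminate|].
  destruct t as [|y t']; [now inversion H|].
  rewrite (IH H). simpl. now replace (length t' - 0) with (length t') by lia.
Qed.

Lemma path_ok_map_seq (f : nat -> E) a n :
  IsInfPath s r f -> path_ok s r (map f (seq a n)).
Proof.
  intros Hf. revert a. induction n as [|n IH]; intros a; simpl; [auto|].
  destruct n; simpl; [auto|]. split; [apply Hf|apply (IH (S a))].
Qed.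

Lemma lastE_map_seq (f : nat -> E) a n : lastE (map f (seq a (S n))) = Some (f (a + n)).
Proof.
  revert a. induction n as [|n IH]; intros a; [simpl; do 2 f_equal; lia|].
  replace (a + S n) with (S a + n) by lia. now rewrite <- IH.
Qed.

Lemma prefix_ultrapath (f : nat -> E) j :
  IsInfPath s r f -> IsUltrapath s r (UP (prefix f (S j)) (r (f j))).
Proof.
  intros Hf. split; [constructor|]. right. split; [split|].
  - unfold prefix. simpl. discriminate.
  - now apply path_ok_map_seq.
  - unfold sub_r_last, prefix. cbn [up_edges up_set]. rewrite lastE_map_seq. auto.
Qed.

Lemma shift_path (f : nat -> E) k :
  IsInfPath s r f -> IsInfPath s r (fun i => f (k + i)).
Proof. intros H i. replace (k + S i) with (S (k + i)) by lia. apply H. Qed.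

End Paths.

Lemma iter_sigma_IP {V E} (f : nat -> E) k :
  Nat.iter k (Defs.sigma (V:=V) (E:=E)) (IP f) = IP (fun i => f (k + i)).
Proof.
  induction k as [|k IH]; [reflexivity|].
  simpl Nat.iter. rewrite IH. simpl. f_equal.
  apply functional_extensionality. intros i. f_equal. lia.
Qed.

(** * The metric on the shift space *)

Lemma half_pow_le (m n : nat) : (m <= n)%nat -> ((/2)^n <= (/2)^m)%R.
Proof.
  induction 1 as [|n _ IH]; [lra|].
  simpl. assert (0 <= (/2)^n)%R by (apply pow_le; lra). lra.
Qed.

Lemma half_pow_pos (n : nat) : (0 < (/2)^n)%R.
Proof. apply pow_lt; lra. Qed.

Definition idx {V E} (p : nat -> upath V E) (q : upath V E) : nat :=
  epsilon (inhabits 0) (fun n => p n = q).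

Section Metric.
Variables (V E : Type) (s : E -> V) (r : E -> V -> Prop) (p : nat -> upath V E).
Hypothesis Hp : enumeration s r p.
Local Open Scope R_scope.
Local Notation ip f := (@IP V E f).
Local Notation d := (d s p).

Lemma idx_spec q : IsUltrapath s r q -> p (idx p q) = q.
Proof. intros Hq. unfold idx. apply epsilon_spec. now apply Hp. Qed.

Lemma d_refl x : d x x = 0.
Proof.
  unfold Defs.d.
  match goal with |- epsilon ?i ?P = _ => assert (H : P (epsilon i P)) end.
  { apply epsilon_spec. exists 0. left. auto. }
  destruct H as [[_ H]|[H _]]; [exact H|tauto].
Qed.

Lemma d_least x y : x <> y -> (exists k, distinguishes s (p k) x y) ->
  exists m, distinguishes s (p m) x y /\
    (forall k, (k < m)%nat -> ~ distinguishes s (p k) x y) /\ d x y = (/2)^(S m).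
Proof.
  intros Hne [k Hk].
  destruct (least_witness (fun k => distinguishes s (p k) x y) k Hk) as [m [Hm Hmin]].
  unfold Defs.d.
  match goal with |- context [epsilon ?i ?P] => assert (H : P (epsilon i P)) end.
  { apply epsilon_spec. exists ((/2)^(S m)). right. split; [exact Hne|]. exists m. auto. }
  destruct H as [[H _]|[_ Hm']]; [tauto|exact Hm'].
Qed.

Lemma dist_ge x y n : distinguishes s (p n) x y -> (/2)^(S n) <= d x y.
Proof.
  intros Hd.
  assert (Hne : x <> y) by (intros ->; destruct Hd as [[H1 H2]|[H1 H2]]; tauto).
  destruct (d_least x y Hne (ex_intro _ n Hd)) as [m [_ [Hmin ->]]].
  apply half_pow_le. destruct (le_lt_dec m n); [lia|].
  exfalso. eapply Hmin; eauto.
Qed.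

Lemma dist_lt x y n :
  x <> y -> (exists k, distinguishes s (p k) x y) ->
  (forall m, (m <= n)%nat -> ~ distinguishes s (p m) x y) ->
  d x y < (/2)^(S n).
Proof.
  intros Hne Hex Hno.
  destruct (d_least x y Hne Hex) as [m [Hm [_ ->]]].
  destruct (le_lt_dec m n); [exfalso; eapply Hno; eauto|].
  eapply Rle_lt_trans; [apply (half_pow_le (S (S n))); lia|].
  simpl. pose proof (half_pow_pos n). lra.
Qed.

Lemma init_prefix (f : nat -> E) j :
  IsInfPath s r f -> init_seg s (UP (prefix f (S j)) (r (f j))) (ip f).
Proof.
  intros Hf. unfold init_seg; cbn [up_edges up_set]. rewrite prefix_length. split.
  - intros i Hi. now apply prefix_nth_error.
  - apply Hf.
Qed.

Lemma prefix_distinguishes (f g : nat -> E) j :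
  IsInfPath s r f -> f j <> g j ->
  distinguishes s (p (idx p (UP (prefix f (S j)) (r (f j))))) (ip f) (ip g).
Proof.
  intros Hf Hne. rewrite idx_spec by now apply prefix_ultrapath.
  left. split; [now apply init_prefix|].
  intros [H _]. cbn [up_edges] in H. rewrite prefix_length in H.
  specialize (H j ltac:(lia)). rewrite prefix_nth_error in H by lia.
  inversion H. auto.
Qed.

Lemma init_seg_IP_agree q (f g : nat -> E) :
  (forall i, (i <= length (up_edges q))%nat -> f i = g i) ->
  init_seg s q (ip f) -> init_seg s q (ip g).
Proof.
  intros H [H1 H2]. split.
  - intros i Hi. rewrite H1 by exact Hi. rewrite H by lia. reflexivity.
  - rewrite <- H by lia. exact H2.
Qed.

Lemma close_of_agree eps : eps > 0 -> exists M, forall f g, IsInfPath s r f ->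
  (forall i, (i < M)%nat -> f i = g i) -> d (ip f) (ip g) < eps.
Proof.
  intros He.
  destruct (pow_lt_1_zero (/2) ltac:(rewrite Rabs_pos_eq; lra) eps He) as [n0 Hn0].
  set (len := fun m => length (up_edges (p m))).
  exists (S (max_upto len n0)). intros f g Hf Hag.
  destruct (classic (ip f = ip g)) as [Heq|Hne]; [rewrite Heq, d_refl; lra|].
  assert (Hlen : forall m, (m <= n0)%nat -> forall i, (i <= len m)%nat -> f i = g i).
  { intros m Hm i Hi. apply Hag. pose proof (max_upto_ge len n0 m Hm). lia. }
  eapply Rlt_trans; [apply (dist_lt _ _ n0 Hne)|].
  - assert (Hj : exists j, f j <> g j).
    { apply NNPP. intros Hno. apply Hne. f_equal. apply functional_extensionality.
      intros i. apply NNPP. eauto. }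
    destruct Hj as [j Hj]. eexists. exact (prefix_distinguishes f g j Hf Hj).
  - intros m Hm [[H1 H2]|[H1 H2]].
    + apply H2. apply (init_seg_IP_agree (p m) f g); [|exact H1]. exact (Hlen m Hm).
    + apply H1. apply (init_seg_IP_agree (p m) g f); [|exact H2].
      intros i Hi. symmetry. exact (Hlen m Hm i Hi).
  - pose proof (Hn0 (S n0) ltac:(lia)) as H.
    rewrite Rabs_pos_eq in H; [exact H|]. left; apply half_pow_pos.
Qed.

Lemma agree_of_close (f : nat -> E) : IsInfPath s r f ->
  forall M, exists eps, eps > 0 /\ forall g, d (ip f) (ip g) < eps ->
     forall i, (i < M)%nat -> f i = g i.
Proof.
  intros Hf M. induction M as [|M [eps [He IH]]].
  - exists 1. split; [lra|]. intros; lia.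
  - set (n := idx p (UP (prefix f (S M)) (r (f M)))).
    exists (Rmin eps ((/2)^(S n))). split.
    { apply Rmin_glb_lt; [exact He|apply half_pow_pos]. }
    intros g Hd i Hi. destruct (Nat.eq_dec i M) as [->|Hi'].
    + apply NNPP. intros Hne.
      pose proof (dist_ge _ _ _ (prefix_distinguishes f g M Hf Hne)) as H.
      pose proof (Rmin_r eps ((/2)^(S n))). fold n in H. lra.
    + apply IH; [|lia]. pose proof (Rmin_l eps ((/2)^(S n))). lra.
Qed.

Lemma far_bound (F : list E) (e0 : E) K :
  exists d0, d0 > 0 /\ forall f g, IsInfPath s r f ->
    (forall i, (i < K)%nat -> In (f i) F) ->
    (exists j, (j < K)%nat /\ f j <> g j) -> d0 <= d (ip f) (ip g).
Proof.
  set (h := fun n => list_max (map (fun w => idx p (UP w (r (last w e0)))) (words F (S n)))).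
  exists ((/2)^(S (max_upto h K))). split; [apply half_pow_pos|].
  intros f g Hf HF [j [Hj Hne]].
  eapply Rle_trans; [|exact (dist_ge _ _ _ (prefix_distinguishes f g j Hf Hne))].
  apply half_pow_le. apply le_n_S.
  eapply Nat.le_trans; [|apply (max_upto_ge h K j); lia].
  apply list_max_ge. apply in_map_iff. exists (prefix f (S j)). split.
  - rewrite prefix_S, last_last. reflexivity.
  - apply prefix_in_words. intros i Hi. apply HF. lia.
Qed.

Lemma finite_point_far (F : list E) l A : InX s r (FP l A) ->
  exists d0, d0 > 0 /\ forall g, IsInfPath s r g -> In (g (length l)) F ->
    d0 <= d (FP l A) (ip g).
Proof.
  intros HX.
  set (n0 := idx p (UP l A)).
  set (n1 := list_max (map (fun e => idx p (UP (l ++ [e]) (r e))) F)).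
  exists ((/2)^(S (Nat.max n0 n1))). split; [apply half_pow_pos|].
  intros g Hg HgF.
  destruct (classic (forall i, (i < length l)%nat -> nth_error l i = Some (g i))) as [Hag|Hnag].
  - (* [l] is a prefix of [g]: the ultrapath [l ++ [g (length l)]] separates them *)
    pose proof (prefix_of_agree l g Hag) as Hl.
    set (q := UP (prefix g (S (length l))) (r (g (length l)))).
    assert (Hdis : distinguishes s (p (idx p q)) (FP l A) (ip g)).
    { rewrite idx_spec by now apply prefix_ultrapath. right. split.
      - intros [t [Ht _]]. apply (f_equal (@length E)) in Ht.
        simpl in Ht. rewrite length_app, length_map, length_seq in Ht. lia.
      - now apply init_prefix. }
    eapply Rle_trans; [|exact (dist_ge _ _ _ Hdis)].
    apply half_pow_le, le_n_S. eapply Nat.le_trans; [|apply Nat.le_max_r].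
    apply list_max_ge, in_map_iff. exists (g (length l)). split; [|exact HgF].
    unfold q. now rewrite prefix_S, <- Hl.
  - (* otherwise the ultrapath [(l, A)] itself separates them *)
    assert (Hq : IsUltrapath s r (UP l A)).
    { destruct HX as [[[HA _] _] Hl]. split; [exact HA|exact Hl]. }
    assert (Hdis : distinguishes s (p n0) (FP l A) (ip g)).
    { unfold n0. rewrite idx_spec by exact Hq. left. split.
      - exists []. rewrite app_nil_r. split; [reflexivity|]. right. auto.
      - intros [H _]. exact (Hnag H). }
    eapply Rle_trans; [|exact (dist_ge _ _ _ Hdis)]. apply half_pow_le. lia.
Qed.

End Metric.

(** * A criterion for DC1 pairs *)

Definition windows (P : nat -> Prop) : Prop :=
  forall K N, exists a b, N <= a /\ 1 <= a /\ K * a <= b /\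
    forall k, a <= k -> k < b -> P k.

Lemma windows_expand (P Q : nat -> Prop) L M : 1 <= L -> windows P ->
  (forall a b k, (forall j, a <= j -> j < b -> P j) -> a * L <= k -> k + M < b * L -> Q k) ->
  windows Q.
Proof.
  intros HL HP HPQ K N. destruct (HP (K + M + 1) N) as [a [b [HNa [Ha [Hab Hw]]]]].
  exists (a * L), (b * L - M - 1). split; [nia|]. split; [nia|]. split; [nia|].
  intros k Hk1 Hk2. apply (HPQ a b k Hw); lia.
Qed.

Lemma Rdiv_lt_of_lt_mul a b z : (0 < b -> a < z * b -> a / b < z)%R.
Proof.
  intros Hb H. apply (Rmult_lt_reg_r b); [exact Hb|]. unfold Rdiv.
  rewrite Rmult_assoc, Rinv_l by lra. lra.
Qed.

Lemma Rlt_div_of_mul_lt a b z : (0 < b -> z * b < a -> z < a / b)%R.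
Proof.
  intros Hb H. apply (Rmult_lt_reg_r b); [exact Hb|]. unfold Rdiv.
  rewrite Rmult_assoc, Rinv_l by lra. lra.
Qed.

Section Counting.
Variables (V E : Type) (s : E -> V) (p : nat -> upath V E).
Local Notation Dk x y k :=
  (d s p (Nat.iter k (Defs.sigma (E:=E)) x) (Nat.iter k (Defs.sigma (E:=E)) y)).

Lemma count_close_le δ x y m : count_close s p δ x y m <= m.
Proof. induction m; cbn [count_close]; [lia|]. destruct Rlt_dec; lia. Qed.

Lemma count_close_mono δ x y m : count_close s p δ x y m <= count_close s p δ x y (S m).
Proof. cbn [count_close]. lia. Qed.

Lemma count_close_lo δ x y a m :
  (forall k, a <= k -> k < m -> (Dk x y k < δ)%R) -> m - a <= count_close s p δ x y m.
Proof.
  induction m as [|m IH]; intros H; cbn [count_close]; [lia|].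
  specialize (IH ltac:(intros; apply H; lia)).
  destruct (le_lt_dec (S m) a); [destruct Rlt_dec; lia|].
  destruct Rlt_dec as [|Hn]; [lia|]. exfalso. apply Hn, H; lia.
Qed.

Lemma count_close_hi δ x y a m :
  (forall k, a <= k -> k < m -> ~ (Dk x y k < δ)%R) -> count_close s p δ x y m <= a.
Proof.
  induction m as [|m IH]; intros H; cbn [count_close]; [lia|].
  destruct (le_lt_dec (S m) a).
  { pose proof (count_close_le δ x y m). destruct Rlt_dec; lia. }
  specialize (IH ltac:(intros; apply H; lia)).
  destruct Rlt_dec as [Hr|]; [exfalso; apply (H m); [lia|lia|exact Hr]|lia].
Qed.

Lemma Phi_nonneg n δ x y : (0 <= Phi s p n δ x y)%R.
Proof.
  unfold Phi. destruct n as [|n]; [simpl; unfold Rdiv; rewrite Rinv_0; lra|].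
  unfold Rdiv. apply Rmult_le_pos; [apply pos_INR|].
  left. apply Rinv_0_lt_compat, lt_0_INR. lia.
Qed.

Lemma limsup_of_windows δ x y :
  windows (fun k => (Dk x y k < δ)%R) -> limsup_is (fun n => Phi s p n δ x y) 1.
Proof.
  intros Hw. split.
  - intros eps He N. destruct (INR_archimed eps 1 He) as [K HK].
    destruct (Hw K N) as [a [b [HNa [Ha [Hab Hcl]]]]].
    assert (HK1 : 1 <= K) by (destruct K; [simpl in HK; lra|lia]).
    exists b. split; [nia|].
    pose proof (Nat.le_trans _ _ _ (count_close_lo δ x y a b Hcl) (count_close_mono δ x y b))
      as Hc.
    assert (Hle : a <= b) by nia.
    apply le_INR in Hc, Hab. rewrite minus_INR in Hc by exact Hle. rewrite mult_INR in Hab.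
    assert (Ha' : (1 <= INR a)%R) by (apply (le_INR 1); lia).
    assert (Hb : (0 < INR b)%R) by (apply lt_0_INR; nia).
    unfold Phi. apply Rlt_gt, Rlt_div_of_mul_lt; [exact Hb|]. nra.
  - intros eps He. destruct (INR_archimed eps 1 He) as [K HK].
    exists (S K). intros n Hn. unfold Phi.
    pose proof (count_close_le δ x y (S n)) as H. apply le_INR in H, Hn. rewrite S_INR in H, Hn.
    assert (Hn' : (0 < INR n)%R) by (pose proof (pos_INR K); lra).
    apply Rdiv_lt_of_lt_mul; [exact Hn'|]. pose proof (pos_INR K). nra.
Qed.

Lemma liminf_of_windows δ x y :
  windows (fun k => ~ (Dk x y k < δ)%R) -> liminf_is (fun n => Phi s p n δ x y) 0.
Proof.
  intros Hw. split.
  - intros eps He N. destruct (INR_archimed eps 1 He) as [K HK].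
    destruct (Hw (K + 1) N) as [a [b [HNa [Ha [Hab Hfar]]]]].
    assert (HK1 : 1 <= K) by (destruct K; [simpl in HK; lra|lia]).
    exists (b - 1). split; [nia|]. unfold Phi.
    replace (S (b - 1)) with b by nia.
    pose proof (count_close_hi δ x y a b Hfar) as Hc.
    assert (Hb : K * a <= b - 1) by nia.
    apply le_INR in Hc, Hb. rewrite mult_INR in Hb.
    assert (Ha' : (1 <= INR a)%R) by (apply (le_INR 1); lia).
    apply Rdiv_lt_of_lt_mul; [apply lt_0_INR; nia|]. nra.
  - intros eps He. exists 0. intros n _. pose proof (Phi_nonneg n δ x y). lra.
Qed.

Lemma DC1_of_windows x y :
  (forall δ, (δ > 0)%R -> windows (fun k => (Dk x y k < δ)%R)) ->
  (exists δ0, (δ0 > 0)%R /\ windows (fun k => ~ (Dk x y k < δ0)%R)) ->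
  DC1_pair s p x y.
Proof.
  intros Hc [δ0 [Hδ0 Hf]]. split.
  - intros δ Hδ. exact (limsup_of_windows δ x y (Hc δ Hδ)).
  - exists δ0. split; [exact Hδ0|]. exact (liminf_of_windows δ0 x y Hf).
Qed.


(** Orbits that eventually coincide are never a DC1 pair: [Φ] tends to [1]
    for every [δ]. *)
Lemma not_DC1_of_eventually_equal x y a :
  (forall k, a <= k -> Nat.iter k (Defs.sigma (E:=E)) x = Nat.iter k (Defs.sigma (E:=E)) y) ->
  ~ DC1_pair s p x y.
Proof.
  intros Heq [_ [δ0 [Hδ0 [Hli _]]]].
  destruct (Hli (1/2)%R ltac:(lra) (2 * a + 1)) as [n [Hn HPhi]].
  assert (Hc : S n - a <= count_close s p δ0 x y (S n)).
  { apply count_close_lo. intros k Hk _. rewrite (Heq k Hk), d_refl. lra. }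
  revert HPhi. apply Rle_not_lt. unfold Phi. rewrite Rplus_0_l. left.
  apply Rlt_div_of_mul_lt; [apply lt_0_INR; lia|].
  apply le_INR in Hc. rewrite minus_INR in Hc by lia. rewrite S_INR in Hc.
  assert (H : (INR (2 * a + 1) <= INR n)%R) by (apply le_INR; lia).
  rewrite plus_INR, mult_INR in H. simpl in H. lra.
Qed.

End Counting.

Section Loops.
Variables (V E : Type) (s : E -> V) (r : E -> V -> Prop) (v : V) (e0 : E).

(** A nonempty list of edges forming a path from [v] back to [v]
    ([e0] is only the default value of [nth]). *)
Definition is_loop (l : list E) : Prop :=
  1 <= length l /\ (forall i, S i < length l -> r (nth i l e0) (s (nth (S i) l e0))) /\
  s (nth 0 l e0) = v /\ r (nth (length l - 1) l e0) v.

(** Two loops at [v] of common length [L] which differ at position [q]: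
    concatenating them in any order yields infinite paths. *)
Record loop_pair (L : nat) (A B : list E) (q : nat) : Prop := {
  lp_loopA : is_loop A;
  lp_loopB : is_loop B;
  lp_lenA : length A = L;
  lp_lenB : length B = L;
  lp_q : q < L;
  lp_diff : nth q A e0 <> nth q B e0 }.

Lemma closed_path_loop l : closed_path s r v l -> is_loop l.
Proof.
  intros [[Hne Hpath] [[e1 [t [Hl Hs]]] [[ek [Hlast Hr]] _]]].
  split; [|split; [|split]].
  - subst; simpl; lia.
  - now apply path_ok_nth.
  - now subst.
  - now rewrite <- (lastE_nth _ l e0 ek Hlast).
Qed.

Lemma loop_app a b : is_loop a -> is_loop b -> is_loop (a ++ b).
Proof.
  intros [Ha1 [Ha2 [Ha3 Ha4]]] [Hb1 [Hb2 [Hb3 Hb4]]]. unfold is_loop. rewrite length_app.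
  split; [lia|split; [|split]].
  - intros i Hi. destruct (lt_dec (S i) (length a)).
    + rewrite !app_nth1 by lia. auto.
    + destruct (Nat.eq_dec (S i) (length a)) as [Heq|].
      * rewrite app_nth1, app_nth2 by lia. replace (S i - length a) with 0 by lia.
        rewrite Hb3. now replace i with (length a - 1) by lia.
      * rewrite !app_nth2 by lia. replace (S i - length a) with (S (i - length a)) by lia.
        apply Hb2. lia.
  - now rewrite app_nth1 by lia.
  - rewrite app_nth2 by lia.
    now replace (length a + length b - 1 - length a) with (length b - 1) by lia.
Qed.

(** Distinct closed paths do not commute: since a closed path never passes
    through [v] in its interior, [a ++ b = b ++ a] would force [a = b]. *)
Lemma closed_paths_not_commute a b :
  closed_path s r v a -> closed_path s r v b -> a <> b -> a ++ b <> b ++ a.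
Proof.
  intros Ha Hb Hab Heq.
  assert (Hinner : forall l, closed_path s r v l ->
            forall i, 0 < i -> i < length l -> s (nth i l e0) <> v).
  { intros l [_ [_ [_ H]]] i H1 H2. apply (H i); [exact H1|]. now apply nth_error_nth'. }
  pose proof (closed_path_loop a Ha) as [Ha1 [_ [Ha3 _]]].
  pose proof (closed_path_loop b Hb) as [Hb1 [_ [Hb3 _]]].
  destruct (lt_eq_lt_dec (length a) (length b)) as [[Hlt|Hle]|Hgt].
  - assert (H := f_equal (fun l => nth (length a) l e0) Heq). simpl in H.
    rewrite app_nth2, app_nth1, Nat.sub_diag in H by lia.
    apply (Hinner b Hb (length a)); [lia|lia|]. now rewrite <- H.
  - apply Hab, (nth_ext _ _ e0 e0); [exact Hle|]. intros n Hn.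
    assert (H := f_equal (fun l => nth n l e0) Heq). simpl in H.
    now rewrite !app_nth1 in H by lia.
  - assert (H := f_equal (fun l => nth (length b) l e0) Heq). simpl in H.
    rewrite app_nth1, app_nth2, Nat.sub_diag in H by lia.
    apply (Hinner a Ha (length b)); [lia|lia|]. now rewrite H.
Qed.

Lemma loop_pair_of_closed_paths a b :
  closed_path s r v a -> closed_path s r v b -> a <> b ->
  exists L A B q, loop_pair L A B q.
Proof.
  intros Ha Hb Hab.
  pose proof (closed_paths_not_commute a b Ha Hb Hab) as Hne.
  assert (Hlen : length (b ++ a) = length (a ++ b)) by (rewrite !length_app; lia).
  assert (Hq : exists q, q < length (a ++ b) /\ nth q (a ++ b) e0 <> nth q (b ++ a) e0).
  { apply NNPP. intros Hno. apply Hne, (nth_ext _ _ e0 e0); [auto|].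
    intros n Hn. apply NNPP. intros H. apply Hno. eauto. }
  destruct Hq as [q [Hq1 Hq2]]. exists (length (a ++ b)), (a ++ b), (b ++ a), q.
  pose proof (closed_path_loop a Ha). pose proof (closed_path_loop b Hb).
  constructor; auto using loop_app.
Qed.

End Loops.

Arguments is_loop {V E}.
Arguments loop_pair {V E}.

(** * Coding binary sequences into block sequences

    The positions [j] are grouped into stages [[tower n, tower (n+1))], with
    [tower n = 2^(2^n)], so that each stage is [tower n] times longer than
    everything before it.  On even stages [code w] is constantly [true]; on
    the odd stage [2m+1] it is constantly [w i] where [m = 2^k + i], [i < 2^k];
    hence every letter of [w] is repeated on infinitely many stages. *)

Definition tower (n : nat) : nat := 2 ^ (2 ^ n).
Definition stage (j : nat) : nat := Nat.log2 (Nat.log2 j).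
Definition offset (m : nat) : nat := m - 2 ^ (Nat.log2 m).

Definition code (w : nat -> bool) (j : nat) : bool :=
  if Nat.even (stage j) then true else w (offset (Nat.div2 (stage j))).

Lemma tower_gt n : n < tower n.
Proof.
  unfold tower. pose proof (Nat.pow_gt_lin_r 2 n ltac:(lia)).
  pose proof (Nat.pow_gt_lin_r 2 (2 ^ n) ltac:(lia)). lia.
Qed.

Lemma tower_S n : tower (S n) = tower n * tower n.
Proof.
  unfold tower. rewrite Nat.pow_succ_r', <- Nat.pow_add_r. f_equal. lia.
Qed.

Lemma stage_tower n j : tower n <= j < tower (S n) -> stage j = n.
Proof.
  intros [H1 H2]. unfold stage, tower in *.
  assert (0 < 2 ^ n) by (apply Nat.neq_0_lt_0, Nat.pow_nonzero; lia).
  assert (0 < 2 ^ 2 ^ n) by (apply Nat.neq_0_lt_0, Nat.pow_nonzero; lia).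
  apply Nat.log2_unique; [lia|]. split.
  - apply Nat.log2_le_mono in H1. now rewrite Nat.log2_pow2 in H1 by lia.
  - apply (proj1 (Nat.log2_lt_pow2 j (2 ^ S n) ltac:(lia))). exact H2.
Qed.

Lemma code_even w m j : tower (2 * m) <= j < tower (S (2 * m)) -> code w j = true.
Proof. intros H. unfold code. now rewrite (stage_tower _ _ H), Nat.even_even. Qed.

Lemma code_odd w m j :
  tower (2 * m + 1) <= j < tower (S (2 * m + 1)) -> code w j = w (offset m).
Proof.
  intros H. unfold code. rewrite (stage_tower _ _ H), Nat.even_odd.
  do 2 f_equal. rewrite Nat.div2_div. symmetry. apply (Nat.div_unique _ _ _ 1); lia.
Qed.

Lemma offset_spec k i : i < 2 ^ k -> offset (2 ^ k + i) = i.
Proof.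
  intros H. unfold offset. rewrite (Nat.log2_unique (2 ^ k + i) k); [lia|lia|].
  rewrite Nat.pow_succ_r'. lia.
Qed.

Lemma code_local w w' j : (forall i, i < j -> w i = w' i) -> code w j = code w' j.
Proof.
  intros H. destruct j as [|j]; [reflexivity|].
  unfold code. destruct (Nat.even (stage (S j))); [reflexivity|]. apply H.
  pose proof (Nat.le_div2_diag_l (stage (S j))). unfold offset, stage in *.
  pose proof (Nat.log2_le_lin (Nat.log2 (S j)) ltac:(lia)).
  pose proof (Nat.log2_lt_lin (S j) ltac:(lia)). lia.
Qed.

Definition reveal (i : nat) : nat := tower (2 * (2 ^ (S i) + i) + 1).

Lemma code_reveal w i : code w (reveal i) = w i.
Proof.
  unfold reveal. rewrite (code_odd w (2 ^ (S i) + i)).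
  - rewrite offset_spec; [reflexivity|]. pose proof (Nat.pow_gt_lin_r 2 (S i) ltac:(lia)). lia.
  - split; [lia|]. rewrite tower_S. pose proof (tower_gt (2 * (2 ^ S i + i) + 1)). nia.
Qed.

Lemma code_inj w1 w2 : (forall j, code w1 j = code w2 j) -> forall i, w1 i = w2 i.
Proof. intros H i. now rewrite <- !(code_reveal _ i). Qed.

(** Codes of two different sequences (possibly shifted by [sft]) agree on
    the even stages and disagree on infinitely many odd stages. *)
Lemma code_windows w1 w2 sft (c1 c2 : nat -> bool) :
  (forall j, c1 (sft + j) = code w1 j) -> (forall j, c2 (sft + j) = code w2 j) ->
  (exists i, w1 i <> w2 i) ->
  windows (fun j => c1 j = c2 j) /\ windows (fun j => c1 j <> c2 j).
Proof.
  intros H1 H2 [i Hi]. split.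
  - intros K N. set (n := 2 * (N + K + sft)). pose proof (tower_gt n).
    exists (sft + tower n), (sft + tower (S n)).
    split; [lia|]. split; [lia|]. split; [rewrite tower_S; nia|].
    intros j Ha Hb. replace j with (sft + (j - sft)) by lia. rewrite H1, H2.
    rewrite (code_even w1 (N + K + sft)), (code_even w2 (N + K + sft)); auto; fold n; lia.
  - intros K N. set (k := N + K + i + sft + 1). set (m := 2 ^ k + i). set (n := 2 * m + 1).
    assert (Hk : k < 2 ^ k) by (apply Nat.pow_gt_lin_r; lia).
    assert (Hoff : offset m = i) by (apply offset_spec; lia).
    pose proof (tower_gt n). assert (n >= k) by (unfold n, m; lia).
    exists (sft + tower n), (sft + tower (S n)).
    split; [lia|]. split; [lia|]. split; [rewrite tower_S; nia|].
    intros j Ha Hb. replace j with (sft + (j - sft)) by lia. rewrite H1, H2.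
    rewrite (code_odd w1 m), (code_odd w2 m), Hoff; [exact Hi|fold n; lia|fold n; lia].
Qed.

(** A set containing an injective image of the Cantor space is uncountable
    (Cantor's diagonal argument). *)
Lemma uncountable_of_cantor {V E} (S : point V E -> Prop) (emb : (nat -> bool) -> point V E) :
  (forall w, S (emb w)) -> (forall w1 w2, emb w1 = emb w2 -> forall i, w1 i = w2 i) ->
  uncountable S.
Proof.
  intros HS Hinj [f Hf].
  set (h := fun n => epsilon (inhabits (fun _ : nat => false)) (fun w => f (emb w) = n)).
  set (diag := fun i => negb (h i i)).
  assert (Hh : f (emb (h (f (emb diag)))) = f (emb diag)).
  { unfold h. apply (epsilon_spec _ (fun w => f (emb w) = f (emb diag))). eauto. }
  apply Hf in Hh; [|apply HS|apply HS].
  pose proof (Hinj _ _ Hh (f (emb diag))) as H. unfold diag in H.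
  destruct (h _ _); discriminate.
Qed.

Definition extends (w : nat -> bool) (l : list bool) : Prop :=
  forall k, k < length l -> w k = nth k l false.

Section CantorCompact.
Variables (I : Type) (P : I -> (nat -> bool) -> Prop).

Definition covered (l : list bool) : Prop :=
  exists li : list I, forall w, extends w l -> exists i, In i li /\ P i w.

Lemma uncovered_step l : ~ covered l -> ~ covered (l ++ [true]) \/ ~ covered (l ++ [false]).
Proof.
  intros Hl. apply NNPP. intros Hno. apply Hl.
  destruct (NNPP _ (fun H => Hno (or_introl H))) as [l1 H1].
  destruct (NNPP _ (fun H => Hno (or_intror H))) as [l2 H2].
  exists (l1 ++ l2). intros w Hw.
  assert (Hwx : extends w (l ++ [w (length l)])).
  { intros k Hk. rewrite length_app in Hk. simpl in Hk.
    destruct (Nat.eq_dec k (length l)) as [->|].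
    - now rewrite app_nth2, Nat.sub_diag by lia.
    - rewrite app_nth1 by lia. apply Hw. lia. }
  destruct (w (length l)).
  - destruct (H1 w Hwx) as [i [Hi HP]]. exists i. split; [apply in_or_app|]; auto.
  - destruct (H2 w Hwx) as [i [Hi HP]]. exists i. split; [apply in_or_app|]; auto.
Qed.

(** If not, an
    infinite branch of uncovered cylinders converges to a point whose
    neighbourhood lies in a single [P i]. *)
Lemma cantor_cover :
  (forall w, exists i M, forall w', (forall k, k < M -> w' k = w k) -> P i w') ->
  exists li : list I, forall w, exists i, In i li /\ P i w.
Proof.
  intros Hcov. apply NNPP. intros Hbad.
  assert (H0 : ~ covered []).
  { intros [li Hli]. apply Hbad. exists li. intros w. apply Hli. intros k Hk. simpl in Hk. lia. }
  set (next := fun l => if excluded_middle_informative (covered (l ++ [true]))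
                        then l ++ [false] else l ++ [true]).
  set (branch := fun k => Nat.iter k next []).
  assert (Hbranch : forall k, ~ covered (branch k)).
  { induction k as [|k IH]; [exact H0|]. simpl. fold (branch k). unfold next.
    destruct excluded_middle_informative; [|assumption].
    destruct (uncovered_step _ IH); tauto. }
  assert (Hlen : forall k, length (branch k) = k).
  { induction k as [|k IH]; [reflexivity|]. simpl. fold (branch k). unfold next.
    destruct excluded_middle_informative; rewrite length_app; simpl; lia. }
  assert (Hgrow : forall k k', k <= k' -> exists t, branch k' = branch k ++ t).
  { intros k k' Hk. induction Hk as [|m _ [t Ht]]; [exists []; now rewrite app_nil_r|].
    simpl. fold (branch m). rewrite Ht. unfold next.
    destruct excluded_middle_informative; eexists; rewrite <- app_assoc; reflexivity. }
  set (lim := fun i => nth i (branch (S i)) false).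
  assert (Hlim : forall k, extends lim (branch k)).
  { intros k i Hi. rewrite Hlen in Hi. unfold lim.
    destruct (Hgrow (S i) k ltac:(lia)) as [t ->].
    rewrite app_nth1; [reflexivity|]. rewrite Hlen. lia. }
  destruct (Hcov lim) as [i [M HM]].
  apply (Hbranch M). exists [i]. intros w Hw. exists i. split; [now left|].
  apply HM. intros k Hk. rewrite (Hw k), (Hlim M k); [reflexivity| |]; rewrite Hlen; lia.
Qed.

End CantorCompact.

(** * Infinite paths built from blocks *)

Section Blocks.
Variables (V E : Type) (s : E -> V) (r : E -> V -> Prop) (p : nat -> upath V E).
Hypothesis Hp : enumeration s r p.
Variables (v : V) (e0 : E) (L : nat) (A B : list E) (q : nat).
Hypothesis HAB : loop_pair s r v e0 L A B q.
Local Notation ip f := (@IP V E f).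

Definition block (b : bool) : list E := if b then A else B.

Definition concat (c : nat -> bool) (i : nat) : E := nth (i mod L) (block (c (i / L))) e0.

Lemma L_pos : 1 <= L.
Proof. destruct HAB as [_ _ _ _ Hq _]. lia. Qed.

Lemma block_loop b : is_loop s r v e0 (block b) /\ length (block b) = L.
Proof. destruct HAB; destruct b; simpl; auto. Qed.

Lemma concat_block c j t : t < L -> concat c (j * L + t) = nth t (block (c j)) e0.
Proof.
  intros Ht. unfold concat.
  replace ((j * L + t) / L) with j by (apply (Nat.div_unique _ _ _ t); lia).
  replace ((j * L + t) mod L) with t by (apply (Nat.mod_unique _ _ j t); lia).
  reflexivity.
Qed.

(** Consecutive blocks link up since every block is a loop at [v]. *)
Lemma concat_path c : IsInfPath s r (concat c).
Proof.
  intros i. pose proof L_pos as HL.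
  rewrite (Nat.div_mod_eq i L). set (j := i / L). set (t := i mod L).
  assert (Ht : t < L) by (apply Nat.mod_upper_bound; lia).
  rewrite (Nat.mul_comm L j), concat_block by exact Ht.
  destruct (block_loop (c j)) as [[_ [Hin [_ Hend]]] Hlen].
  destruct (le_lt_dec L (S t)).
  - (* last edge of a block, followed by the first edge of the next one *)
    replace (S (j * L + t)) with (S j * L + 0) by (simpl; lia).
    rewrite concat_block by lia. destruct (block_loop (c (S j))) as [[_ [_ [-> _]]] _].
    rewrite Hlen in Hend. now replace t with (L - 1) by lia.
  - replace (S (j * L + t)) with (j * L + S t) by lia.
    rewrite concat_block by exact l. apply Hin. lia.
Qed.

Lemma concat_in c i : In (concat c i) (A ++ B).
Proof.
  pose proof L_pos. destruct HAB as [_ _ HA HB _ _]. unfold concat. apply in_or_app.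
  destruct (c (i / L)); simpl; [left|right]; apply nth_In;
    [rewrite HA|rewrite HB]; apply Nat.mod_upper_bound; lia.
Qed.

Lemma concat_reveals c1 c2 j : concat c1 (j * L + q) = concat c2 (j * L + q) -> c1 j = c2 j.
Proof.
  destruct HAB as [_ _ _ _ Hq Hd]. rewrite !concat_block by exact Hq.
  destruct (c1 j), (c2 j); simpl; congruence.
Qed.

Lemma concat_inj c1 c2 : ip (concat c1) = ip (concat c2) -> forall j, c1 j = c2 j.
Proof. intros H j. injection H as H. apply concat_reveals. now rewrite H. Qed.

Lemma concat_agree c1 c2 a b :
  (forall j, a <= j -> j < b -> c1 j = c2 j) ->
  forall i, a * L <= i -> i < b * L -> concat c1 i = concat c2 i.
Proof.
  pose proof L_pos. intros Hag i Hi1 Hi2. unfold concat. rewrite Hag; [reflexivity| |].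
  - apply Nat.div_le_lower_bound; lia.
  - apply Nat.Div0.div_lt_upper_bound; lia.
Qed.

Lemma concat_close eps : (eps > 0)%R -> exists M, forall c1 c2,
  (forall j, j < M -> c1 j = c2 j) -> (d s p (ip (concat c1)) (ip (concat c2)) < eps)%R.
Proof.
  intros He. destruct (close_of_agree _ _ _ _ _ Hp eps He) as [M HM].
  pose proof L_pos. exists M. intros c1 c2 Hag. apply HM; [apply concat_path|].
  intros i Hi. apply (concat_agree c1 c2 0 M); [intros; apply Hag; lia|lia|nia].
Qed.

Lemma DC1_concat c1 c2 :
  windows (fun j => c1 j = c2 j) -> windows (fun j => c1 j <> c2 j) ->
  DC1_pair s p (ip (concat c1)) (ip (concat c2)).
Proof.
  intros Hag Hdis. pose proof L_pos as HL. apply DC1_of_windows.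
  - intros δ Hδ. destruct (close_of_agree _ _ _ _ _ Hp δ Hδ) as [M HM].
    apply (windows_expand _ _ L M HL Hag). intros a b k Hw Hk1 Hk2.
    rewrite !iter_sigma_IP. apply HM; [apply shift_path, concat_path|].
    intros i Hi. apply (concat_agree c1 c2 a b Hw); lia.
  - destruct (far_bound _ _ _ _ _ Hp (A ++ B) e0 (2 * L)) as [d0 [Hd0 Hfar]].
    exists d0. split; [exact Hd0|].
    apply (windows_expand _ _ L L HL Hdis). intros a b k Hw Hk1 Hk2.
    rewrite !iter_sigma_IP. apply Rle_not_lt, Hfar.
    + apply shift_path, concat_path.
    + intros i _. apply concat_in.
    + (* the next block after position [k] differs, at its position [q] *)
      set (j := k / L + 1).
      assert (Hj1 : a <= j) by (assert (a <= k / L) by (apply Nat.div_le_lower_bound; lia); lia).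
      assert (Hj2 : j < b)
        by (assert (k / L < b - 1) by (apply Nat.Div0.div_lt_upper_bound; nia); lia).
      pose proof (Nat.div_mod_eq k L). pose proof (Nat.mod_upper_bound k L ltac:(lia)).
      destruct HAB as [_ _ _ _ Hq _].
      exists (j * L + q - k). split; [unfold j; nia|].
      replace (k + (j * L + q - k)) with (j * L + q) by (unfold j; nia).
      intros Heq. exact (Hw j Hj1 Hj2 (concat_reveals c1 c2 j Heq)).
Qed.


Definition coded (w : nat -> bool) : point V E := ip (concat (code w)).

Definition coded_set (x : point V E) : Prop := exists w, x = coded w.

Lemma coded_InX x : coded_set x -> InX s r x.
Proof. intros [w ->]. apply concat_path. Qed.

Lemma coded_uncountable : uncountable coded_set.
Proof.
  apply (uncountable_of_cantor _ coded); [intros w; now exists w|].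
  intros w1 w2 H. apply code_inj, concat_inj, H.
Qed.

Lemma coded_DC1 : DC1_set s r p coded_set.
Proof.
  split; [exact coded_InX|]. intros x y [w1 ->] [w2 ->] Hne.
  assert (Hd : exists i, w1 i <> w2 i).
  { apply NNPP. intros Hno. apply Hne. f_equal.
    apply functional_extensionality. intros i. apply NNPP. eauto. }
  destruct (code_windows w1 w2 0 (code w1) (code w2) (fun j => eq_refl) (fun j => eq_refl) Hd)
    as [Hag Hdis].
  now apply DC1_concat.
Qed.

Lemma coded_close eps : (eps > 0)%R -> exists M, forall w w',
  (forall i, i < M -> w i = w' i) -> (d s p (coded w) (coded w') < eps)%R.
Proof.
  intros He. destruct (concat_close eps He) as [M HM]. exists M. intros w w' Hw.
  apply HM. intros j Hj. apply code_local. intros i Hi. apply Hw. lia.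
Qed.

Definition decode (f : nat -> E) (i : nat) : bool :=
  if excluded_middle_informative (f (reveal i * L + q) = nth q A e0) then true else false.

Lemma decode_coded w i : decode (concat (code w)) i = w i.
Proof.
  destruct HAB as [_ _ _ _ Hq Hd]. unfold decode.
  rewrite concat_block, code_reveal by exact Hq.
  destruct (w i), excluded_middle_informative; simpl in *; congruence.
Qed.

Lemma coded_closed : closed_X s r p coded_set.
Proof.
  pose proof L_pos as HL. split; [exact coded_InX|].
  intros x [HX Hcl]. destruct x as [f|l A0].
  - (* [f] agrees with the code of its own decoding *)
    exists (decode f). unfold coded. f_equal. apply functional_extensionality. intros e.
    set (h := fun i => reveal i * L + q).
    destruct (agree_of_close _ _ _ _ _ Hp f HX (S (e + max_upto h (e / L)))) as [eps [He Hag]].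
    destruct (Hcl eps He) as [y [[w ->] Hy]]. specialize (Hag _ Hy).
    assert (Hw : forall i, i < e / L -> decode f i = w i).
    { intros i Hi. rewrite <- (decode_coded w i). unfold decode.
      rewrite (Hag (reveal i * L + q)); [reflexivity|].
      pose proof (max_upto_ge h (e / L) i ltac:(lia)). unfold h in *. lia. }
    rewrite (Hag e) by lia. unfold concat. now rewrite (code_local (decode f) w (e / L)).
  - (* a finite point stays away from all paths built from [A] and [B] *)
    exfalso. destruct (finite_point_far _ _ _ _ _ Hp (A ++ B) l A0 HX) as [d0 [Hd0 Hfar]].
    destruct (Hcl d0 Hd0) as [y [[w ->] Hy]].
    pose proof (Hfar _ (concat_path (code w)) (concat_in _ _)). unfold coded in Hy. lra.
Qed.

Lemma coded_perfect : perfect_X s r p coded_set.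
Proof.
  split; [exact coded_closed|]. intros x [w ->] eps He.
  destruct (coded_close eps He) as [M HM].
  set (w' := fun k => if Nat.eqb k M then negb (w k) else w k).
  exists (coded w'). split; [now exists w'|]. split.
  - intros H. pose proof (code_inj _ _ (concat_inj _ _ H) M) as H'.
    unfold w' in H'. rewrite Nat.eqb_refl in H'. destruct (w M); discriminate.
  - apply HM. intros i Hi. unfold w'. destruct (Nat.eqb_spec i M); [lia|reflexivity].
Qed.

Lemma coded_compact : compact_X s r p coded_set.
Proof.
  split; [exact coded_InX|]. intros J U Hopen Hcov.
  destruct (cantor_cover J (fun i w => U i (coded w))) as [li Hli].
  - intros w. destruct (Hcov (coded w) (ex_intro _ w eq_refl)) as [i Hi].
    destruct (Hopen i (coded w) (concat_path _) Hi) as [eps [He Hball]].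
    destruct (coded_close eps He) as [M HM]. exists i, M. intros w' Hw'.
    apply Hball; [apply concat_path|]. apply HM. intros k Hk. symmetry. now apply Hw'.
  - exists li. intros x [w ->]. apply Hli.
Qed.

Definition lead (b : bool) (c : nat -> bool) (j : nat) : bool :=
  match j with 0 => b | S j' => c j' end.

Definition zero_seq : nat -> bool := fun _ => false.
Definition spike (k : nat) : nat -> bool := fun i => Nat.eqb i k.

Definition lead_coded (b : bool) (w : nat -> bool) : point V E := ip (concat (lead b (code w))).

(** The codes of sequences starting with [true] and of the zero sequence,
    all preceded by the block [true], together with the codes of the spikes
    preceded by the block [false].
    The latter accumulate at [lead_coded false zero_seq], which is not in the set
    and whose orbit eventually coincides with that of [lead_coded true zero_seq]. *)
Definition spiked_set (x : point V E) : Prop :=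
  (exists w, w 0 = true /\ x = lead_coded true w) \/ x = lead_coded true zero_seq \/
  (exists k, 1 <= k /\ x = lead_coded false (spike k)).

Lemma spiked_set_rep x : spiked_set x ->
  exists b w, x = lead_coded b w /\ (b = true <-> (w 0 = true \/ forall i, w i = false)).
Proof.
  intros [[w [Hw ->]]|[->|[k [Hk ->]]]].
  - exists true, w. tauto.
  - exists true, zero_seq. split; [reflexivity|]. split; [intros _; now right|reflexivity].
  - exists false, (spike k). split; [reflexivity|]. split; [discriminate|].
    intros [H|H]; unfold spike in H.
    + destruct k; [lia|discriminate].
    + specialize (H k). now rewrite Nat.eqb_refl in H.
Qed.

Lemma lead_coded_inj b1 b2 w1 w2 :
  lead_coded b1 w1 = lead_coded b2 w2 -> b1 = b2 /\ forall i, w1 i = w2 i.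
Proof.
  intros H. pose proof (concat_inj _ _ H) as Hc. split; [exact (Hc 0)|].
  apply code_inj. intros j. exact (Hc (S j)).
Qed.

Lemma spiked_InX x : spiked_set x -> InX s r x.
Proof. intros Hx. destruct (spiked_set_rep x Hx) as [b [w [-> _]]]. apply concat_path. Qed.

Lemma spiked_uncountable : uncountable spiked_set.
Proof.
  apply (uncountable_of_cantor _ (fun w => lead_coded true (lead true w))).
  - intros w. left. now exists (lead true w).
  - intros w1 w2 H i. exact (proj2 (lead_coded_inj _ _ _ _ H) (S i)).
Qed.

Lemma spiked_DC1 : DC1_set s r p spiked_set.
Proof.
  split; [exact spiked_InX|]. intros x y Hx Hy Hne.
  destruct (spiked_set_rep x Hx) as [b1 [w1 [-> Hb1]]].
  destruct (spiked_set_rep y Hy) as [b2 [w2 [-> Hb2]]].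
  assert (Hd : exists i, w1 i <> w2 i).
  { apply NNPP. intros Hno.
    assert (Hw : forall i, w1 i = w2 i) by (intros i; apply NNPP; eauto).
    assert (w1 = w2) as <- by (now apply functional_extensionality).
    assert (b1 = b2) as <-; [|contradiction].
    destruct b1, b2; try reflexivity; exfalso.
    - assert (false = true) by (apply Hb2, Hb1; reflexivity). discriminate.
    - assert (false = true) by (apply Hb1, Hb2; reflexivity). discriminate. }
  destruct (code_windows w1 w2 1 (lead b1 (code w1)) (lead b2 (code w2))
              (fun j => eq_refl) (fun j => eq_refl) Hd) as [Hag Hdis].
  now apply DC1_concat.
Qed.

Lemma spike_limit_in_closure : closure_X s r p spiked_set (lead_coded false zero_seq).
Proof.
  split; [apply concat_path|]. intros eps He.
  destruct (concat_close eps He) as [M HM].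
  exists (lead_coded false (spike (S M))).
  split; [right; right; exists (S M); split; [lia|reflexivity]|].
  apply HM. intros [|j] Hj; [reflexivity|]. apply code_local. intros i Hi.
  unfold zero_seq, spike. destruct (Nat.eqb_spec i (S M)); [lia|reflexivity].
Qed.

Lemma spike_limit_notin : ~ spiked_set (lead_coded false zero_seq).
Proof.
  intros [[w [_ H]]|[H|[k [Hk H]]]].
  - now destruct (lead_coded_inj _ _ _ _ H).
  - now destruct (lead_coded_inj _ _ _ _ H).
  - pose proof (proj2 (lead_coded_inj _ _ _ _ H) k) as Hk'.
    unfold zero_seq, spike in Hk'. now rewrite Nat.eqb_refl in Hk'.
Qed.

Lemma spiked_not_closed : ~ closed_X s r p spiked_set.
Proof.
  intros [_ Hc]. apply spike_limit_notin, Hc, spike_limit_in_closure.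
Qed.

(** [lead_coded true zero_seq] and [lead_coded false zero_seq] differ only in the first
    block, so they are distinct points of the closure that are not a DC1 pair. *)
Lemma spiked_closure_not_DC1 : ~ DC1_set s r p (closure_X s r p spiked_set).
Proof.
  intros [_ HD]. pose proof L_pos as HL.
  assert (Hin : closure_X s r p spiked_set (lead_coded true zero_seq)).
  { split; [apply concat_path|]. intros eps He. exists (lead_coded true zero_seq).
    split; [right; now left|]. rewrite d_refl. lra. }
  assert (Hne : lead_coded true zero_seq <> lead_coded false zero_seq)
    by (intros H; now destruct (lead_coded_inj _ _ _ _ H)).
  apply (not_DC1_of_eventually_equal V E s p
           (lead_coded true zero_seq) (lead_coded false zero_seq) L);
    [|exact (HD _ _ Hin spike_limit_in_closure Hne)].
  intros k Hk. unfold lead_coded. rewrite !iter_sigma_IP. f_equal.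
  apply functional_extensionality. intros i.
  apply (concat_agree _ _ 1 (S (k + i))); [intros [|j] Hj1 _; [lia|reflexivity]|lia|nia].
Qed.

End Blocks.

Theorem proposition3p8 (V E : Type) (s : E -> V) (r : E -> V -> Prop)
  (HV : countable V) (HE : countable E)
  (Hr : forall e, exists x, r e x)
  (Hnosink : forall w, exists e, s e = w)
  (p : nat -> upath V E) (Hp : enumeration s r p)
  (v : V)
  (Hv : exists a b, closed_path s r v a /\ closed_path s r v b /\ a <> b) :
  distrib_chaotic_1 s r p /\
  (exists S, uncountable S /\ perfect_X s r p S /\ compact_X s r p S /\
             DC1_set s r p S) /\
  (exists S, uncountable S /\ DC1_set s r p S /\ ~ closed_X s r p S /\
             ~ DC1_set s r p (closure_X s r p S)).
Proof.
  destruct Hv as [a [b [Ha [Hb Hab]]]].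
  (* the first edge of [a] serves as default value *)
  destruct a as [|e0 a']; [now destruct Ha as [[Hne _] _]|].
  destruct (loop_pair_of_closed_paths _ _ s r v e0 _ _ Ha Hb Hab) as [L [A [B [q HAB]]]].
  split; [|split].
  - exists (coded_set V E e0 L A B).
    split; [eapply coded_DC1|eapply coded_uncountable]; eauto.
  - exists (coded_set V E e0 L A B). split; [eapply coded_uncountable; eauto|].
    split; [eapply coded_perfect; eauto|]. split; [eapply coded_compact; eauto|].
    eapply coded_DC1; eauto.
  - exists (spiked_set V E e0 L A B).
    split; [eapply spiked_uncountable; eauto|]. split; [eapply spiked_DC1; eauto|].
    split; [eapply spiked_not_closed|eapply spiked_closure_not_DC1]; eauto.
Qed.
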